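(* Let $(G_n)$ be a sequence of finite graphs with $v_n:=|V(G_n)|$. Let $W_n\subset V(G_n)$ satisfy $\lim_n |W_n|/v_n=0$. For $R>0$ and $t>0$ let $$s_n(R,t):=\bigl|\{x\in V(G_n): |V_R(x)|>t\}\bigr| \quad\text{and}\quad w_n(R):=\bigl|\{x\in V(G_n): V_R(x)\cap W_n\neq\emptyset\}\bigr|,$$ where $V_R(x)$ is the vertex set of the ball of radius $R$ about $x$ in $G_n$ (graph distance). If for each $R>0$ we have $\lim_{t\to\infty}\limsup_{n\to\infty}s_n(R,t)/v_n=0$, then for each $R>0$ we have $\lim_{n\to\infty}w_n(R)/v_n=0$. *)

From HB Require Import structures.
From mathcomp Require Import all_boot all_order all_algebra.
From mathcomp Require Import all_classical all_reals all_analysis.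
Set Implicit Arguments. Unset Strict Implicit. Unset Printing Implicit Defensive.
Import Order.TTheory GRing.Theory Num.Theory.

(* V_R(x): vertices at graph distance <= R from x, i.e. reachable from x by an
   e-path with at most R edges. *)
Definition ball (V : finType) (e : rel V) (R : nat) (x : V) : {set V} :=
  [set y | `[< exists p : seq V, [/\ path e x p, last x p = y & (size p <= R)%N] >] ].

Definition s_count (R : realType) (V : finType) (e : rel V) (r : nat) (t : R) : nat :=
  #|[set x : V | (#|ball e r x|%:R > t)%R]|.

Definition w_count (V : finType) (e : rel V) (W : {set V}) (r : nat) : nat :=
  #|[set x : V | ~~ [disjoint ball e r x & W]]|.

From Pilot Require Import Defs.
From HB Require Import structures.
From mathcomp Require Import all_boot all_order all_algebra.
From mathcomp Require Import all_classical all_reals all_analysis.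
Import Order.TTheory GRing.Theory Num.Theory.
Import numFieldNormedType.Exports.
Local Open Scope ring_scope.

(* If the r-ball of x meets W at y, then either the 2r-ball of x is large
   (x is counted by s(2r, t)), or the r-ball of y, which sits inside the
   2r-ball of x, is small; in the latter case x lies in one of the r-balls of
   size at most t centred in W, and these cover at most t |W| vertices.
   Hence w(r) <= s(2r, t) + t |W| for every t >= 0; dividing by |V| and
   letting first n and then t grow gives the theorem. *)

Lemma leq_card_bigcup (I T : finType) (P : pred I) (A : I -> {set T}) :
  (#|\bigcup_(i | P i) A i| <= \sum_(i | P i) #|A i|)%N.
Proof.
elim/big_rec2: _ => [|i n B _ IH]; first by rewrite cards0.
by rewrite cardsU (leq_trans (leq_subr _ _)) ?leq_add.
Qed.

Section Balls.
Variables (V : finType) (e : rel V).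

Lemma ball_triangle r1 r2 x y z :
  y \in Defs.ball e r1 x -> z \in Defs.ball e r2 y -> z \in Defs.ball e (r1 + r2) x.
Proof.
rewrite !inE => -[p [ep <- sp]] [q [eq <- sq]].
by exists (p ++ q); rewrite cat_path ep eq last_cat size_cat leq_add.
Qed.

Lemma ball_subset r1 r2 x y :
  y \in Defs.ball e r1 x -> Defs.ball e r2 y \subset Defs.ball e (r1 + r2) x.
Proof. by move=> yx; apply/fintype.subsetP => z; apply: ball_triangle. Qed.

Hypothesis esym : symmetric e.

Lemma ball_sym r x y : (y \in Defs.ball e r x) = (x \in Defs.ball e r y).
Proof.
suff ball_symW a b : a \in Defs.ball e r b -> b \in Defs.ball e r a.
  by apply/idP/idP; apply: ball_symW.
rewrite !inE => -[p [ep <- sp]]; exists (rev (belast b p)); split.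
- by rewrite rev_path (eq_path (e' := e)) // => u v; rewrite /= esym.
- by case: p {ep sp} => [|c p] //=; rewrite rev_cons last_rcons.
- by rewrite size_rev size_belast.
Qed.

Lemma meets_ball_subset {R : realDomainType} (W : {set V}) r (t : R) :
  [set x | ~~ [disjoint Defs.ball e r x & W]] \subset
  [set x | t < #|Defs.ball e (r + r) x|%:R] :|:
  \bigcup_(y | (y \in W) && (#|Defs.ball e r y|%:R <= t)) Defs.ball e r y.
Proof.
apply/fintype.subsetP => x; rewrite !inE => /pred0Pn[y /andP[yx yW]].
have [//|small_2r] := ltrP t #|Defs.ball e (r + r) x|%:R.
apply/finset.bigcupP; exists y; last by rewrite -ball_sym.
apply/andP; split=> //; rewrite (le_trans _ small_2r) // ler_nat.
exact/subset_leq_card/ball_subset.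
Qed.

Lemma w_count_le (R : realType) (W : {set V}) r (t : R) : 0 <= t ->
  (w_count e W r)%:R <= (s_count e (r + r) t)%:R + t * #|W|%:R.
Proof.
move=> t0; set small := fun y => (y \in W) && (#|Defs.ball e r y|%:R <= t).
apply: (le_trans (y := (s_count e (r + r) t
  + \sum_(y | small y) #|Defs.ball e r y|)%:R)).
  rewrite ler_nat (leq_trans (subset_leq_card (meets_ball_subset W r t))) //.
  by rewrite (leq_trans (leq_card_setU _ _)) // leq_add2l leq_card_bigcup.
rewrite natrD lerD2l natr_sum (le_trans (y := \sum_(y | small y) t)) //.
  by apply: ler_sum => y /andP[].
rewrite sumr_const -[t *+ _]mulr_natr ler_wpM2l // ler_nat.
by apply/subset_leq_card/fintype.subsetP => y; rewrite unfold_in => /andP[].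
Qed.

End Balls.

Local Open Scope classical_set_scope.

Lemma limf_esup_lt_near (T : choiceType) (X : filteredType T) (R : realType)
    (f : X -> \bar R) (F : set_system X) {FF : Filter F} (x : \bar R) :
  (limf_esup f F < x)%E -> F [set y | (f y < x)%E].
Proof.
move=> /ereal_inf_lt[_ [A FA <-] supA]; apply: filterS FA => y Ay.
by apply: le_lt_trans supA; apply: ereal_sup_ubound; exists y.
Qed.

Lemma cvg0_limn_esup_dominated (R : realType) (u a : R^nat) (s : R -> R^nat) :
  (forall n, 0 <= u n) ->
  (forall t n, 0 <= t -> u n <= s t n + t * a n) ->
  a @ \oo --> 0 ->
  (fun t => limn_esup (fun n => (s t n)%:E)) @ +oo --> 0%E ->
  u @ \oo --> 0.
Proof.
move=> u0 us a0 s0; apply/cvgrPdist_lt => eps eps0.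
have eps2 : 0 < eps / 2 by rewrite divr_gt0.
have [sfin /cvgr_lt sfine] := (fine_cvgP _ _).1 s0.
have [t [[tfin tlt] t0]] := filter_ex
  (filterI (filterI sfin (sfine _ eps2)) (nbhs_pinfty_ge (real0 R))).
have /limf_esup_lt_near st : (limn_esup (fun n => (s t n)%:E) < (eps / 2)%:E)%E.
  by rewrite -(fineK tfin) lte_fin.
have /cvgr_lt ta : (fun n => t * a n) @ \oo --> 0.
  by rewrite -(mulr0 t); apply: cvgMl_tmp.
near=> n; rewrite sub0r normrN ger0_norm // (le_lt_trans (us t n t0)) //.
rewrite [eps]splitr ltrD //; last by near: n; apply: ta.
by rewrite -lte_fin; near: n.
Unshelve. all: by end_near.
Qed.

Theorem lemma3p12 (R : realType) (V : nat -> finType) (e : forall n, rel (V n))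
  (esym : forall n, symmetric (e n))
  (W : forall n, {set V n})
  (hW : (fun n => (#|W n|%:R / #|V n|%:R : R)) @ \oo --> 0)
  (hs : forall r : nat, (0 < r)%N ->
     (fun t : R =>
        limn_esup (fun n => (((s_count (e n) r t)%:R / #|V n|%:R : R))%:E))
       @ +oo%R --> 0%E) :
  forall r : nat, (0 < r)%N ->
    (fun n => ((w_count (e n) (W n) r)%:R / #|V n|%:R : R)) @ \oo --> 0.
Proof.
move=> r r0.
pose s (t : R) n := ((s_count (e n) (r + r) t)%:R / #|V n|%:R : R).
apply: (@cvg0_limn_esup_dominated R _ _ s _ _ hW (hs _ (ltn_addl r r0))).
  by move=> n; rewrite divr_ge0.
move=> t n t0; rewrite /s mulrA -mulrDl ler_wpM2r ?invr_ge0 //.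
exact: w_count_le.
Qed.
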